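(* In the construction below, every $E^*\subseteq E$ with $|E^*| > st+2k$ satisfies $\alpha(E^* ) < A$; in particular, no such $E^*$ is an admissible solution of the constructed CSCN instance.
   Context: Let $G'=(V',E')$ be a connected undirected graph, let $S=\{u_1,\dots,u_s\}\subseteq V'$ with $s=|S|$, and let $k\ge 0$ be a real number with $|E'|\ge 2k$. Let $t\ge 1$ be an integer. Let $V = V'\cup\{v_{i,j} : 1\le i\le s,\ 1\le j\le t\}$ (the $v_{i,j}$ are new vertices) and let $E$ be the set of all pairs of vertices of $V$ (edges undirected). Define $w^*:E\to\mathbb{R}$ by: $w^*(\{v_{i,j},u_i\})=1$ for all $i,j$; $w^*(\{v_{i,j},u\})=0$ for every $u\in V\setminus\{u_i\}$; $w^*(e)=\frac12$ for every $e\in E'$; $w^*(\{u,u'\})=0$ for $u,u'\in V'$ with $\{u,u'\}\notin E'$. Set $A=\frac{st+k}{st+2k}$ and $B=\frac{\frac12(|E'|-2k)}{st+2k}$. For nonempty $E^*\subseteq E$ let $\alpha(E^* )=\frac{\sum_{e\in E^*}w^*(e)}{|E^*|}$ and $\beta(E^* )=\frac{\sum_{e\in E\setminus E^*}w^*(e)}{|E^*|}$. The graph induced by $E^*$ has vertex set the vertices incident to some edge of $E^*$ and edge set $E^*$. An admissible solution of the constructed CSCN instance is a nonempty $E^*\subseteq E$ whose induced graph is connected and which satisfies $\alpha(E^* )\ge A$ and $\beta(E^* )\le B$. *)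

From HB Require Import structures.
From mathcomp Require Import all_boot all_order all_algebra.
Set Implicit Arguments. Unset Strict Implicit. Unset Printing Implicit Defensive.
Import Order.TTheory GRing.Theory Num.Theory.
Local Open Scope ring_scope.

Section Construction.
Variables (V' : finType) (e : rel V') (S : {set V'}) (t : nat).

Definition simple_graph := symmetric e /\ irreflexive e.
Definition graph_connected := forall x y : V', connect e x y.

Definition Eprime : {set {set V'}} := [set [set x; y] | x in V', y in V' & e x y].

(* Index i of u_i ranges over S; the new vertex v_{i,j} is inr (i, j). *)
Definition Sidx := {x : V' | x \in S}.
Definition Vt := (V' + (Sidx * 'I_t))%type.

Definition Eall : {set {set Vt}} := [set P : {set Vt} | #|P| == 2%N].

Variable R : realFieldType.

Definition wstar (P : {set Vt}) : R :=
  if [exists i : Sidx, exists j : 'I_t, P == [set (inr (i, j) : Vt); inl (val i)]]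
  then 1
  else if [exists x : V', exists y : V', (P == [set (inl x : Vt); inl y]) && e x y]
  then 1 / 2
  else 0.

Definition alpha (Es : {set {set Vt}}) : R :=
  (\sum_(P in Es) wstar P) / #|Es|%:R.

Definition beta (Es : {set {set Vt}}) : R :=
  (\sum_(P in Eall :\: Es) wstar P) / #|Es|%:R.

Definition incident (Es : {set {set Vt}}) (x : Vt) : bool :=
  [exists P in Es, x \in P].
Definition induced_adj (Es : {set {set Vt}}) : rel Vt :=
  fun x y => (x != y) && ([set x; y] \in Es).
Definition induced_connected (Es : {set {set Vt}}) :=
  forall x y, incident Es x -> incident Es y -> connect (induced_adj Es) x y.

Definition Aconst (k : R) : R :=
  ((#|S| * t)%:R + k) / ((#|S| * t)%:R + 2 * k).
Definition Bconst (k : R) : R :=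
  (1 / 2 * (#|Eprime|%:R - 2 * k)) / ((#|S| * t)%:R + 2 * k).

Definition admissible (k : R) (Es : {set {set Vt}}) :=
  [/\ Es != set0, Es \subset Eall, induced_connected Es,
      Aconst k <= alpha Es & beta Es <= Bconst k].

End Construction.

(* Only the pendant edges [v_{i,j}, u_i] have weight 1, and there are at most
   s t of them; every other pair weighs at most 1/2.  Hence a set of m edges
   has average weight at most (m + s t) / (2 m) = 1/2 + s t / (2 m), whereas
   A = 1/2 + s t / (2 (s t + 2 k)); the gap is strict as soon as m > s t + 2 k. *)

From HB Require Import structures.
From mathcomp Require Import all_boot all_order all_algebra.
From mathcomp Require Import lra.
Import Order.TTheory GRing.Theory Num.Theory.
Local Open Scope ring_scope.

Lemma sum_indicator_le_card {R : numDomainType} {T : finType} (A B : {set T}) :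
  \sum_(x in A) ((x \in B)%:R : R) <= #|B|%:R.
Proof.
rewrite -natr_sum ler_nat -big_mkcondr /= sum1_card.
by apply: subset_leq_card; apply/subsetP => x /andP[].
Qed.

Lemma mean_lt_ratio (R : realFieldType) (s k m W : R) :
  0 < s -> 0 < s + 2 * k -> s + 2 * k < m -> W <= (m + s) / 2 ->
  W / m < (s + k) / (s + 2 * k).
Proof.
move=> s_gt0 d_gt0 d_lt_m W_le.
have m_gt0 : 0 < m by lra.
apply: (@le_lt_trans _ _ ((m + s) / 2 / m)); first by rewrite ler_pM2r ?invr_gt0.
rewrite ltr_pdivrMr // mulrAC ltr_pdivlMr //.
(* (m + s) (s + 2 k) < 2 m (s + k)  reduces to  s (s + 2 k) < s m *)
have : s * (s + 2 * k) < s * m by rewrite ltr_pM2l.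
lra.
Qed.

Section PendantEdges.
Variables (V' : finType) (e : rel V') (S : {set V'}) (t : nat) (R : realFieldType).

Definition pendant_edges : {set {set Vt S t}} :=
  [set [set inr p; inl (val p.1)] | p : Sidx S * 'I_t].

Lemma card_pendant_edges : (#|pendant_edges| <= #|S| * t)%N.
Proof.
apply: leq_trans (leq_imset_card _ _) _.
by rewrite card_prod card_ord card_sig.
Qed.

Lemma wstar_le (P : {set Vt S t}) :
  wstar e R P <= (1 + (P \in pendant_edges)%:R) / 2.
Proof.
rewrite /wstar; case: ifP => [/existsP[i /existsP[j /eqP ->]] | _].
  have -> : [set inr (i, j); inl (val i)] \in pendant_edges.
    by apply/imsetP; exists (i, j).
  rewrite /=; lra.
have := ler0n R (P \in pendant_edges).
by case: ifP => _; lra.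
Qed.

Lemma sum_wstar_le (Es : {set {set Vt S t}}) :
  \sum_(P in Es) wstar e R P <= (#|Es|%:R + (#|S| * t)%:R) / 2.
Proof.
apply: le_trans (ler_sum _ (fun P _ => wstar_le P)) _.
rewrite -mulr_suml big_split /= sumr_const ler_pM2r ?invr_gt0 // lerD2l.
apply: le_trans (sum_indicator_le_card Es pendant_edges) _.
by rewrite ler_nat card_pendant_edges.
Qed.

Lemma alpha_lt_Aconst (k : R) (Es : {set {set Vt S t}}) :
  S != set0 -> (0 < t)%N -> 0 <= k -> (#|S| * t)%:R + 2 * k < #|Es|%:R ->
  alpha e R Es < Aconst S t k.
Proof.
move=> S_neq0 t_gt0 k_ge0 Es_large.
have st_gt0 : 0 < ((#|S| * t)%:R : R) by rewrite ltr0n muln_gt0 card_gt0 S_neq0.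
apply: mean_lt_ratio => //; last exact: sum_wstar_le.
lra.
Qed.

End PendantEdges.

Theorem lemma2 (R : realFieldType) (V' : finType) (e : rel V') (S : {set V'})
    (t : nat) (k : R) :
  simple_graph e -> graph_connected e ->
  S != set0 ->
  0 <= k -> 2 * k <= #|Eprime e|%:R ->
  (0 < t)%N ->
  forall Es : {set {set Vt S t}}, Es \subset Eall S t ->
    (#|S| * t)%:R + 2 * k < #|Es|%:R ->
    alpha e R Es < Aconst S t k /\ ~ admissible e k Es.
Proof.
move=> _ _ S_neq0 k_ge0 _ t_gt0 Es _ Es_large.
have alpha_lt : alpha e R Es < Aconst S t k by exact: alpha_lt_Aconst.
split=> // -[_ _ _ A_le_alpha _].
by move: alpha_lt; rewrite ltNge A_le_alpha.
Qed.
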